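(* For a tree $T$ of order $n$, the following statements are equivalent: (a) $\mathrm{diss}(T)=\frac{2n}{3}$; (b) $T\in\mathcal{T}$; (c) $n\equiv 0 \pmod 3$, and for every vertex $y$ of $T$, at most two components of $T-y$ have order not congruent to $0$ modulo $3$.
   Context: A set $D$ of vertices of a graph $G$ is a dissociation set if the induced subgraph $G[D]$ has maximum degree at most $1$; $\mathrm{diss}(G)$ is the maximum cardinality of a dissociation set of $G$. Operation $(O_1)$ applied to a graph $G'$: add three new vertices $u,v,w$ with edges $uv$, $vw$, and one edge from $w$ to some vertex of $G'$ (i.e., attach a new path $P_3$ by an edge at one of its endvertices). Operation $(O_2)$ applied to $G'$: add three new vertices $v,u,u'$ with edges $vu$, $vu'$, and one edge from $v$ to some vertex of $G'$ (i.e., attach a new $P_3$ by an edge at its central vertex). $\mathcal{T}$ is the set of all trees obtained from the path $P_3$ on three vertices by finitely many (possibly zero) applications of $(O_1)$ and $(O_2)$. *)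

From mathcomp Require Import all_boot.
Set Implicit Arguments. Unset Strict Implicit. Unset Printing Implicit Defensive.

(* A finite simple graph: vertex type T : finType, adjacency adj : rel T,
   assumed symmetric and irreflexive (hypotheses of the theorem). *)

(* A tree: nonempty, connected, and without cycles (a cycle being a
   duplicate-free closed walk with at least 3 vertices). *)
Definition is_tree (T : finType) (adj : rel T) : Prop :=
  0 < #|T| /\
  (forall x y : T, connect adj x y) /\
  (forall s : seq T, ucycle adj s -> size s <= 2).

Definition dissociation (T : finType) (adj : rel T) (D : {set T}) : bool :=
  [forall x in D, #|[set y in D | adj x y]| <= 1].

Definition diss (T : finType) (adj : rel T) : nat :=
  \max_(D : {set T} | dissociation adj D) #|D|.

Definition del_adj (T : finType) (adj : rel T) (y : T) : rel T :=
  fun a b => [&& a != y, b != y & adj a b].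

Definition components_minus (T : finType) (adj : rel T) (y : T) : {set {set T}} :=
  [set [set z | connect (del_adj adj y) x z] | x in [set~ y]].

(* The class 𝒯, on graphs with vertex set {0,...,n-1} (encoded in nat).
   sym_pair a b x y  <=>  {x,y} = {a,b}. *)
Definition sym_pair (a b x y : nat) : bool :=
  ((x == a) && (y == b)) || ((x == b) && (y == a)).

Inductive inTT : nat -> rel nat -> Prop :=
| TT_P3 : forall e : rel nat,
    (forall x y, e x y = sym_pair 0 1 x y || sym_pair 1 2 x y) ->
    inTT 3 e
| TT_O1 : forall n (e e' : rel nat) (z : nat), inTT n e -> z < n ->
    (* new vertices u = n, v = n+1, w = n+2; edges uv, vw, wz *)
    (forall x y, e' x y = [|| [&& x < n, y < n & e x y],
                              sym_pair n n.+1 x y,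
                              sym_pair n.+1 n.+2 x y |
                              sym_pair n.+2 z x y]) ->
    inTT (n + 3) e'
| TT_O2 : forall n (e e' : rel nat) (z : nat), inTT n e -> z < n ->
    (* new vertices v = n, u = n+1, u' = n+2; edges vu, vu', vz *)
    (forall x y, e' x y = [|| [&& x < n, y < n & e x y],
                              sym_pair n n.+1 x y,
                              sym_pair n n.+2 x y |
                              sym_pair n z x y]) ->
    inTT (n + 3) e'.

Definition in_class_T (T : finType) (adj : rel T) : Prop :=
  exists (n : nat) (e : rel nat) (f : T -> nat),
    [/\ inTT n e, #|T| = n, injective f, (forall x, f x < n) &
        (forall x y, adj x y = e (f x) (f y))].

From mathcomp Require Import all_boot zify.
Set Implicit Arguments. Unset Strict Implicit. Unset Printing Implicit Defensive.

(* At a vertex y of a tree, write r_i for the residues mod 3 of the orders of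
   the branches (the components of T - y).  Maximum dissociation sets of the
   branches combine, so diss T is at least the sum of their dissociation
   numbers.  Every tree with at least three vertices has a vertex whose
   residues sum to at least 2, and induction on the order gives
   3 diss T >= 2n + (n mod 3); applied to the branches at any vertex y this
   also gives 3 diss T >= 2n - 2 + sum r_i.  Hence 3 diss T = 2n forces
   sum r_i <= 2 at every vertex, which is (c).  Conversely, under (c) a
   smallest branch of order divisible by 3 is a P3 hanging from the rest of
   the tree by an end or by its centre; removing it preserves (c), so by
   induction T arises by (O1) and (O2), the tree being P3 itself when there is
   no such branch.  Finally, a dissociation set contains at most two vertices
   of each added P3, so trees of the class have 3 diss T <= 2n. *)

Lemma connect_ind (T : finType) (e : rel T) (z : T) (P : T -> Prop) :
  P z -> (forall t t', connect e z t -> P t -> e t t' -> P t') ->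
  forall t, connect e z t -> P t.
Proof.
move=> Pz step t /connectP [p pth ->].
elim/last_ind: p pth => [//|p a IH].
rewrite rcons_path => /andP[pp ea]; rewrite last_rcons.
apply: (step (last z p)) => //; last exact: IH.
by apply/connectP; exists p.
Qed.

Lemma card_indexed_partition (I T : finType) (J : {set I}) (B : I -> {set T})
    (U : {set T}) :
  (forall i, i \in J -> B i \subset U) ->
  (forall t, t \in U -> exists2 i, i \in J & t \in B i) ->
  (forall i j t, i \in J -> j \in J -> t \in B i -> t \in B j -> i = j) ->
  #|U| = \sum_(i in J) #|B i|.
Proof.
move=> sub cov dis; rewrite -sum1_card.
have e1 t : t \in U -> 1 = \sum_(i in J) (t \in B i : nat).
  move=> tU; have [i iJ tBi] := cov t tU.
  rewrite (bigD1 i) //= tBi big1 // => j /andP[jJ nji].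
  case tBj: (t \in B j) => //.
  by move: nji; rewrite (dis _ _ _ jJ iJ tBj tBi) eqxx.
rewrite (eq_bigr _ e1) exchange_big /=; apply: eq_bigr => i iJ.
rewrite -sum1_card big_mkcond [RHS]big_mkcond /=; apply: eq_bigr => t _.
case tB: (t \in B i); case tU: (t \in U) => //.
by move: tU; rewrite (subsetP (sub i iJ) t tB).
Qed.

Lemma leq_sum_term (I : finType) (A : {set I}) (F : I -> nat) x :
  x \in A -> F x <= \sum_(z in A) F z.
Proof. by move=> xA; rewrite (bigD1 x) //= leq_addr. Qed.

Lemma card_support_le_sum (I : finType) (A : {set I}) (F : I -> nat) :
  #|[set x in A | F x != 0]| <= \sum_(x in A) F x.
Proof.
rewrite -sum1_card big_mkcond [X in _ <= X]big_mkcond /=.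
by apply: leq_sum => x _; rewrite inE; case: (x \in A) => //=; case: (F x).
Qed.

Section Tree.
Variables (T : finType) (adj : rel T).
Hypotheses (adj_sym : symmetric adj) (adj_irr : irreflexive adj).
Hypothesis acyclic : forall s : seq T, ucycle adj s -> size s <= 2.
Implicit Types S A D : {set T}.

Definition induced S : rel T := fun a b => [&& a \in S, b \in S & adj a b].
Definition nbr S (y : T) : {set T} := [set z in S | adj y z].
Definition branch S (y x : T) : {set T} := [set z | connect (induced (S :\ y)) x z].

Lemma induced_sym S : symmetric (induced S).
Proof. by move=> a b; rewrite /induced adj_sym andbCA. Qed.

Lemma connect_inducedC S a b : connect (induced S) a b = connect (induced S) b a.
Proof. exact: (sym_connect_sym (@induced_sym S)). Qed.

Lemma connect_induced_mem S a b : connect (induced S) a b -> a \in S -> b \in S.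
Proof.
move=> c aS; apply: (connect_ind (P := fun t => t \in S)) c => //.
by move=> t t' _ _ /and3P[].
Qed.

Lemma connect_inducedS S S' a b :
  S \subset S' -> connect (induced S) a b -> connect (induced S') a b.
Proof.
move=> sub; apply: connect_sub => u v /and3P[uS vS uv]; apply: connect1.
by rewrite /induced (subsetP sub _ uS) (subsetP sub _ vS).
Qed.

Lemma path_induced_mem A x q : path (induced A) x q -> all (mem A) q.
Proof. by elim: q x => //= h q IH x /andP[/and3P[_ -> _] /IH]. Qed.

Lemma path_induced_adj A x q : path (induced A) x q -> path adj x q.
Proof. by apply: sub_path => u v /and3P[]. Qed.

(* The only use of acyclicity: a path avoiding y between two distinct
   neighbours of y would close a cycle through y. *)
Lemma connect_nbr_eq A y a b : y \notin A -> adj y a -> adj y b ->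
  connect (induced A) a b -> a = b.
Proof.
move=> yA ya yb /connectP [p pth eb]; subst b; move: yb.
case: (shortenP pth) => p' pth' upq _ {pth}.
case: p' pth' upq => [//|a1 p'] pth' upq yb; exfalso.
have ynin : y \notin a :: a1 :: p'.
  rewrite inE negb_or; apply/andP; split.
    by apply: contraNneq yA => ->; case/andP: pth' => /and3P[].
  by apply/negP => /(allP (path_induced_mem pth')); apply/negP.
have cyc : ucycle adj (y :: a :: a1 :: p').
  rewrite /ucycle cons_uniq ynin upq andbT /cycle -cats1 cat_path /= ya.
  by have /= /andP[-> ->] := path_induced_adj pth'; rewrite adj_sym yb.
by move: (acyclic cyc).
Qed.

Definition connected S := forall a b, a \in S -> b \in S -> connect (induced S) a b.

Lemma nbrP S y x : reflect (x \in S /\ adj y x) (x \in nbr S y).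
Proof. by rewrite inE; apply: andP. Qed.

Lemma nbr_neq S y x : x \in nbr S y -> x != y.
Proof. by case/nbrP=> _ yx; apply: contraTneq yx => ->; rewrite adj_irr. Qed.

Lemma nbr_sym S y x : y \in S -> x \in nbr S y -> y \in nbr S x.
Proof. by move=> yS /nbrP[_ yx]; rewrite inE yS adj_sym. Qed.

Lemma nbr_subset S y : nbr S y \subset S.
Proof. by apply/subsetP => x /nbrP[]. Qed.

Lemma branch_self S y x : x \in branch S y x.
Proof. by rewrite inE connect0. Qed.

Lemma branch_sub S y x : x \in nbr S y -> branch S y x \subset S :\ y.
Proof.
move=> xn; apply/subsetP => t; rewrite inE => /connect_induced_mem; apply.
by rewrite !inE (nbr_neq xn); case/nbrP: xn.
Qed.

Lemma branch_subset S y x : x \in nbr S y -> branch S y x \subset S.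
Proof. by move=> xn; apply: subset_trans (branch_sub xn) (subsetDl _ _). Qed.

Lemma branch_trans S y x t : t \in branch S y x -> branch S y t = branch S y x.
Proof.
rewrite inE => c; apply/setP => u; rewrite !inE; apply/idP/idP => [|c2].
  exact: connect_trans.
by rewrite connect_inducedC in c; apply: connect_trans c c2.
Qed.

Lemma branch_disj S y x z t : x \in nbr S y -> z \in nbr S y ->
  t \in branch S y x -> t \in branch S y z -> x = z.
Proof.
move=> /nbrP[_ yx] /nbrP[_ yz] tx tz.
apply: (connect_nbr_eq (A := S :\ y) (y := y)) => //; first by rewrite !inE eqxx.
have := tx; rewrite inE => c1; move: tz; rewrite inE connect_inducedC => c2.
exact: connect_trans c1 c2.
Qed.

Lemma branch_edge S y x a b : x \in nbr S y -> a \in branch S y x -> b \in S -> b != y ->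
  adj a b -> b \in branch S y x.
Proof.
move=> xn ab bS by_ ab'.
have aS := subsetP (branch_sub xn) a ab.
move: ab; rewrite !inE => c; apply: (connect_trans c); apply: connect1.
by rewrite /induced aS !inE by_ bS ab'.
Qed.

Lemma connected_branch S y x : connected (branch S y x).
Proof.
have H t : t \in branch S y x -> connect (induced (branch S y x)) x t.
  rewrite [t \in _]inE.
  apply: (connect_ind (P := fun t => connect (induced (branch S y x)) x t)) => // u v cu c1 uv.
  apply: (connect_trans c1); apply: connect1.
  case/and3P: uv => uS vS uv; rewrite /induced uv andbT !inE cu /=.
  by apply: connect_trans cu (connect1 _); rewrite /induced uS vS uv.
move=> a b ax bx; apply: connect_trans (H b bx); rewrite connect_inducedC; exact: H.
Qed.

Lemma branch_cover S y t : connected S -> y \in S -> t \in S -> t != y ->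
  exists2 x, x \in nbr S y & t \in branch S y x.
Proof.
move=> cS yS tS ty; have c := cS y t yS tS.
suff : t = y \/ exists2 x, x \in nbr S y & t \in branch S y x.
  by case=> // /eqP; rewrite (negbTE ty).
apply: (connect_ind (P := fun u => u = y \/ exists2 x, x \in nbr S y & u \in branch S y x)) c;
  first by left.
move=> u v _ Pu /and3P[uS vS uv].
have [->|vy] := eqVneq v y; first by left.
right; case: Pu => [eu|[x xn ux]].
  by subst u; exists v; [rewrite inE vS uv | exact: branch_self].
by exists x => //; apply: branch_edge ux vS vy uv.
Qed.

Lemma branch_subbranch S y x z : y \in S -> x \in nbr S y -> z \in nbr S x -> z != y ->
  branch S x z \subset branch S y x.
Proof.
move=> yS xn zn zy; apply/subsetP => t; rewrite [t \in branch S x z]inE.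
have xS : x \in S by case/nbrP: xn.
have zS : z \in S by case/nbrP: zn.
have Pz : z \in branch S y x.
  by apply: (branch_edge xn (branch_self _ _ _) zS zy); case/nbrP: zn.
apply: (connect_ind (P := fun u => u \in branch S y x)) => // u v czu ub uv.
have czv : connect (induced (S :\ x)) z v by apply: connect_trans czu (connect1 uv).
case/and3P: uv => _ /setD1P [vx vS] uv.
apply: (branch_edge xn ub vS _ uv).
apply/eqP => vy; subst v.
have := connect_nbr_eq (A := S :\ x) (y := x) (a := z) (b := y).
rewrite !inE eqxx /= => /(_ isT); case/nbrP: zn => _ -> /(_ isT).
case/nbrP: (nbr_sym yS xn) => _ -> /(_ isT) /(_ czv) /eqP; by rewrite (negbTE zy).
Qed.

Lemma branch_compl S y x : connected S -> y \in S -> x \in nbr S y ->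
  branch S x y = S :\: branch S y x.
Proof.
move=> cS yS xn; have xS : x \in S by case/nbrP: xn.
have yn := nbr_sym yS xn.
apply/setP => t; apply/idP/idP.
  move=> tb; have := subsetP (branch_sub yn) t tb; rewrite in_setD1 => /andP[_ tS].
  rewrite in_setD tS andbT; move: tb; rewrite [t \in branch S x y]inE.
  apply: (connect_ind (P := fun u => u \notin branch S y x)).
    by apply/negP => /(subsetP (branch_sub xn)); rewrite !inE eqxx.
  move=> u v _ ub /and3P[uS]; rewrite !inE => /andP[vx vS] uv.
  apply/negP => vb.
  have [uy|uny] := eqVneq u y.
    subst u.
    have := connect_nbr_eq (A := S :\ y) (y := y) (a := x) (b := v).
    rewrite !inE eqxx /= => /(_ isT); case/nbrP: xn => _ -> /(_ isT) /(_ uv).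
    by move=> /(_ vb) /eqP; rewrite eq_sym (negbTE vx).
  rewrite !inE in uS; case/andP: uS => _ uS.
  have vb2 : v \in branch S y x by rewrite inE.
  have ubr : u \in branch S y x by apply: (branch_edge xn vb2 uS uny); rewrite adj_sym.
  by rewrite ubr in ub.
rewrite in_setD => /andP[tnb tS].
have [->|ty] := eqVneq t y; first exact: branch_self.
have [w wn tw] := branch_cover cS yS tS ty.
have wx : w != x by apply: contraNneq tnb => <-.
exact: (subsetP (branch_subbranch xS yn wn wx)).
Qed.

Lemma card_branches S y : connected S -> y \in S ->
  #|S| = (\sum_(x in nbr S y) #|branch S y x|).+1.
Proof.
move=> cS yS; rewrite (cardsD1 y) yS add1n; congr (_.+1).
apply: card_indexed_partition.
- by move=> i; apply: branch_sub.
- by move=> t; rewrite !inE => /andP[ty tS]; exact: branch_cover.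
- by move=> i j t; apply: branch_disj.
Qed.

Lemma card_branch_lt S y x : x \in nbr S y -> y \in S -> #|branch S y x| < #|S|.
Proof.
move=> xn yS; apply: (leq_trans (n := #|S :\ y|.+1)).
  by rewrite ltnS subset_leq_card // branch_sub.
by rewrite (cardsD1 y S) yS.
Qed.

Lemma card_branch_compl S y x : connected S -> y \in S -> x \in nbr S y ->
  #|branch S x y| = #|S| - #|branch S y x|.
Proof. by move=> cS yS xn; rewrite branch_compl // cardsDS // branch_subset. Qed.

Lemma card_branch S y x : connected S -> y \in S -> x \in nbr S y ->
  #|branch S y x| = (\sum_(z in nbr S x :\ y) #|branch S x z|).+1.
Proof.
move=> cS yS xn; have xS : x \in S by case/nbrP: xn.
have := card_branches cS xS; rewrite (big_setD1 y (nbr_sym yS xn)) /=.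
rewrite card_branch_compl //; have := card_branch_lt xn yS; lia.
Qed.

Definition diss_in S :=
  \max_(D : {set T} | (D \subset S) && dissociation adj D) #|D|.
Definition diss_witness S :=
  [arg max_(D > set0 | (D \subset S) && dissociation adj D) #|D|].

Lemma dissociation0 : dissociation adj set0.
Proof. by apply/forall_inP => x; rewrite inE. Qed.

Lemma diss_witnessP S :
  [/\ diss_witness S \subset S, dissociation adj (diss_witness S)
    & #|diss_witness S| = diss_in S].
Proof.
rewrite /diss_in (bigmax_eq_arg set0) ?sub0set ?dissociation0 //.
rewrite /diss_witness; case: arg_maxnP; first by rewrite sub0set dissociation0.
by move=> D /andP[DS dD] _.
Qed.

Lemma diss_in_ge S D : D \subset S -> dissociation adj D -> #|D| <= diss_in S.
Proof. by move=> DS dD; apply: (leq_bigmax_cond D); rewrite DS dD. Qed.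

Lemma diss_in_le S m :
  (forall D, D \subset S -> dissociation adj D -> #|D| <= m) -> diss_in S <= m.
Proof. by move=> H; apply/bigmax_leqP => D /andP[]; apply: H. Qed.

Lemma dissP D :
  reflect (forall x, x \in D -> #|[set y in D | adj x y]| <= 1) (dissociation adj D).
Proof. exact: (iffP forall_inP). Qed.

Lemma dissociationS D D' : D' \subset D -> dissociation adj D -> dissociation adj D'.
Proof.
move=> sub /dissP dD; apply/dissP => x xD'.
apply: leq_trans (dD x (subsetP sub x xD')); apply: subset_leq_card.
by apply/subsetP => z; rewrite !inE => /andP[/(subsetP sub) -> ->].
Qed.

Lemma dissociation_card_le2 S : #|S| <= 2 -> dissociation adj S.
Proof.
move=> S2; apply/dissP => x xS.
have : [set z in S | adj x z] \subset S :\ x.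
  apply/subsetP => z; rewrite !inE => /andP[zS xz]; rewrite zS andbT.
  by apply: contraTneq xz => ->; rewrite adj_irr.
move/subset_leq_card; rewrite (cardsD1 x S) xS in S2; lia.
Qed.

(* No edge joins two branches at y, so maximum dissociation sets of the
   branches combine into one of S. *)
Lemma sum_diss_branches_le S y : connected S -> y \in S ->
  \sum_(x in nbr S y) diss_in (branch S y x) <= diss_in S.
Proof.
move=> cS yS; pose U := \bigcup_(x in nbr S y) diss_witness (branch S y x).
have wsub x : diss_witness (branch S y x) \subset branch S y x.
  by case: (diss_witnessP (branch S y x)).
have <- : #|U| = \sum_(x in nbr S y) diss_in (branch S y x).
  under eq_bigr => x _ do case: (diss_witnessP (branch S y x)) => _ _ <-.
  apply: card_indexed_partition.
  - by move=> i iI; apply: (bigcup_sup i).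
  - by move=> t /bigcupP [i iI ti]; exists i.
  - move=> i j t iI jI ti tj.
    exact: (branch_disj iI jI (subsetP (wsub i) t ti) (subsetP (wsub j) t tj)).
apply: diss_in_ge.
  apply/bigcupsP => x xn; exact: subset_trans (wsub x) (branch_subset xn).
apply/dissP => t /bigcupP [x xn tx].
have [_ /dissP dx _] := diss_witnessP (branch S y x).
apply: leq_trans (dx t tx); apply: subset_leq_card.
apply/subsetP => z; rewrite !inE => /andP[/bigcupP [x' xn' zx'] tz]; rewrite tz andbT.
have zb' := subsetP (wsub x') z zx'.
have := subsetP (branch_sub xn') z zb'; rewrite in_setD1 => /andP[zy zS].
have zb := branch_edge xn (subsetP (wsub x) t tx) zS zy tz.
by rewrite (branch_disj xn xn' zb zb').
Qed.

Lemma diss_ge_branch_residues S y : connected S -> y \in S ->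
  (forall x, x \in nbr S y ->
     2 * #|branch S y x| + #|branch S y x| %% 3 <= 3 * diss_in (branch S y x)) ->
  2 * #|S| + \sum_(x in nbr S y) (#|branch S y x| %% 3) <= 3 * diss_in S + 2.
Proof.
move=> cS yS IH.
have := sum_diss_branches_le cS yS; rewrite -(leq_pmul2l (isT : 0 < 3)) => hdiss.
have : \sum_(x in nbr S y) (2 * #|branch S y x| + #|branch S y x| %% 3)
     <= \sum_(x in nbr S y) 3 * diss_in (branch S y x) by exact: leq_sum.
rewrite big_split /= -!big_distrr /= => hsum.
rewrite (card_branches cS yS); lia.
Qed.

Lemma exists_leaf S : connected S -> 2 <= #|S| ->
  exists q l, [/\ q \in S, l \in nbr S q & nbr S l = [set q]].
Proof.
move=> cS S2.
have [a aS] : exists a, a \in S by apply/card_gt0P; apply: leq_trans S2.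
have [b bS ba] : exists2 b, b \in S & b != a.
  have : 0 < #|S :\ a| by rewrite (cardsD1 a S) aS in S2.
  by case/card_gt0P => b; rewrite in_setD1 => /andP[ba bS]; exists b.
have [x0 xn0 _] := branch_cover cS aS bS ba.
suff H k q l : q \in S -> l \in nbr S q -> #|branch S q l| <= k ->
   exists q l, [/\ q \in S, l \in nbr S q & nbr S l = [set q]].
  exact: (H _ a x0 aS xn0 (leqnn _)).
elim: k q l => [|k IH] q l qS ln.
  by rewrite leqn0 cards_eq0 => /eqP e; move: (branch_self S q l); rewrite e inE.
move=> sz; have [e|] := eqVneq (nbr S l :\ q) set0.
  exists q, l; split => //; apply/setP => z; rewrite inE.
  apply/idP/eqP => [zn|->]; last exact: nbr_sym.
  have : (z \in nbr S l :\ q) = false by rewrite e inE.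
  by rewrite in_setD1 zn andbT => /negbFE/eqP.
case/set0Pn => z; rewrite in_setD1 => /andP[zq zn].
have lS : l \in S by case/nbrP: ln.
apply: (IH l z lS zn).
by have := card_branch cS qS ln; rewrite (bigD1 z) /= ?in_setD1 ?zq //; lia.
Qed.

(* The neighbour q of a leaf l works unless the other branches at q all have
   order 0 mod 3; then |S| = 2 mod 3 and any other neighbour w of q works,
   its branch containing q having order |S| - |branch q w| = 2 mod 3. *)
Lemma exists_vertex_residues_ge2 S : connected S -> 3 <= #|S| ->
  exists2 y, y \in S & 2 <= \sum_(x in nbr S y) (#|branch S y x| %% 3).
Proof.
move=> cS S3.
have [q [l [qS ln nl]]] := exists_leaf cS (ltnW S3).
have bl1 : #|branch S q l| = 1.
  rewrite (card_branch cS qS ln) big1 // => z; rewrite in_setD1 nl inE.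
  by case/andP => /negbTE ->.
have [big|small] := leqP 2 (\sum_(x in nbr S q) (#|branch S q x| %% 3)).
  by exists q.
have nbl x : (x \in nbr S q) && (x != l) = (x \in nbr S q :\ l).
  by rewrite in_setD1 andbC.
move: small; rewrite (bigD1 l) //= bl1 (eq_bigl _ _ nbl) => small.
have others0 x : x \in nbr S q :\ l -> #|branch S q x| %% 3 = 0.
  move=> xn; have /eqP : \sum_(x in nbr S q :\ l) (#|branch S q x| %% 3) = 0 by lia.
  by rewrite sum_nat_eq0 => /forall_inP /(_ x xn)/eqP.
have cS' := card_branches cS qS; rewrite (bigD1 l) //= bl1 (eq_bigl _ _ nbl) in cS'.
have [w wn] : exists w, w \in nbr S q :\ l.
  apply/set0Pn; apply/negP => /eqP e.
  by move: cS'; rewrite e big_set0; lia.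
have wn' : w \in nbr S q by move: wn; rewrite in_setD1 => /andP[].
exists w; first by case/nbrP: wn'.
apply: leq_trans (leq_sum_term _ (nbr_sym qS wn')).
rewrite card_branch_compl //.
have : (\sum_(i in nbr S q :\ l) #|branch S q i|) %% 3 = 0.
  by rewrite -modn_summ big1 ?mod0n // => x /others0.
have := others0 w wn; have := card_branch_lt wn' qS; lia.
Qed.

Lemma diss_lower_bound S : connected S -> 2 * #|S| + #|S| %% 3 <= 3 * diss_in S.
Proof.
elim: {S}#|S| {-2}S (leqnn #|S|) => [|n IH] S Sn cS.
  by move: Sn; rewrite leqn0 cards_eq0 => /eqP ->; rewrite cards0.
have [S2|S3] := leqP #|S| 2.
  by have := diss_in_ge (subxx S) (dissociation_card_le2 S2); lia.
have [y yS good] := exists_vertex_residues_ge2 cS S3.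
have : 2 * #|S| + \sum_(x in nbr S y) (#|branch S y x| %% 3) <= 3 * diss_in S + 2.
  apply: (diss_ge_branch_residues cS yS) => x xn.
  apply: IH; last exact: connected_branch.
  by have := card_branch_lt xn yS; lia.
(* sum r_i is congruent to |S| - 1 mod 3 and at least 2, so sum r_i - 2 >= |S| %% 3. *)
have := modn_summ (index_enum T) (fun x => x \in nbr S y) (fun x => #|branch S y x|) 3.
move: good; rewrite (card_branches cS yS).
set B := \sum_(_ in _) _; set R := \sum_(_ in _) _; lia.
Qed.

Definition bad_branches S y := [set x in nbr S y | #|branch S y x| %% 3 != 0].

Lemma card_bad_branches_le2 S y : connected S -> 3 * diss_in S <= 2 * #|S| ->
  y \in S -> #|bad_branches S y| <= 2.
Proof.
move=> cS up yS.
have := diss_ge_branch_residues cS yS (fun x _ => diss_lower_bound (@connected_branch S y x)).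
have := card_support_le_sum (nbr S y) (fun x => #|branch S y x| %% 3).
rewrite -/(bad_branches S y); lia.
Qed.

Definition branch_cond S :=
  #|S| %% 3 = 0 /\ forall y, y \in S -> #|bad_branches S y| <= 2.

Definition no_zero_branch_below S m := forall a b, a \in S -> b \in nbr S a ->
  #|branch S a b| < m -> #|branch S a b| %% 3 != 0.

Lemma nbr_eq1 S d q : q \in nbr S d -> nbr S d :\ q = set0 -> nbr S d = [set q].
Proof. by move=> qn e; rewrite -(setD1K qn) e setU0. Qed.

Lemma nbr_eq2 S d q e : q \in nbr S d -> nbr S d :\ q = [set e] -> nbr S d = [set q; e].
Proof. by move=> qn h; rewrite -(setD1K qn) h. Qed.

Lemma card_subbranch_lt S q d z : connected S -> q \in S -> d \in nbr S q ->
  z \in nbr S d :\ q -> #|branch S d z| < #|branch S q d|.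
Proof. by move=> cS qS dn zn; rewrite (card_branch cS qS dn) (bigD1 z) //=; lia. Qed.

Lemma card_bad_branches_ge S q d m : connected S -> q \in S -> d \in nbr S q ->
  no_zero_branch_below S m -> #|branch S q d| <= m -> #|branch S d q| %% 3 != 0 ->
  (#|nbr S d :\ q|).+1 <= #|bad_branches S d|.
Proof.
move=> cS qS dn mB le rq.
have dS : d \in S by case/nbrP: dn.
apply: (@leq_trans #|q |: (nbr S d :\ q)|); first by rewrite cardsU1 in_setD1 eqxx.
apply: subset_leq_card; apply/subsetP => z; rewrite /bad_branches in_setU1 in_setD1 inE.
case/orP => [/eqP ->|/andP[zq zn]]; first by rewrite (nbr_sym qS dn) rq.
have zn' : z \in nbr S d :\ q by rewrite in_setD1 zq zn.
rewrite zn /=; apply: (mB d z dS zn).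
exact: leq_trans (card_subbranch_lt cS qS dn zn') le.
Qed.

Lemma leaf_of_branch_mod1 S q d : connected S -> branch_cond S -> q \in S ->
  d \in nbr S q -> #|branch S q d| %% 3 = 1 -> #|branch S d q| %% 3 != 0 ->
  no_zero_branch_below S #|branch S q d| -> nbr S d = [set q].
Proof.
move=> cS [_ cc] qS dn r1 rq mB.
have dS : d \in S by case/nbrP: dn.
have := card_bad_branches_ge cS qS dn mB (leqnn _) rq; have := cc d dS.
move=> c2 h; have : #|nbr S d :\ q| <= 1 by lia.
rewrite leq_eqVlt ltnS leqn0 cards_eq0 => /orP[/cards1P [z hz] | /eqP e].
  have zn : z \in nbr S d :\ q by rewrite hz inE.
  have zS : z \in nbr S d by move: zn; rewrite in_setD1 => /andP[].
  have := mB d z dS zS (card_subbranch_lt cS qS dn zn).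
  by have := card_branch cS qS dn; rewrite hz big_set1; lia.
exact: nbr_eq1 (nbr_sym qS dn) e.
Qed.

Lemma pendant_edge_of_branch_mod2 S q d : connected S -> branch_cond S -> q \in S ->
  d \in nbr S q -> #|branch S q d| %% 3 = 2 -> #|branch S d q| %% 3 != 0 ->
  no_zero_branch_below S #|branch S q d| ->
  exists e, [/\ e != q, nbr S d = [set q; e] & nbr S e = [set d]].
Proof.
move=> cS [m0 cc] qS dn r2 rq mB.
have dS : d \in S by case/nbrP: dn.
have := card_bad_branches_ge cS qS dn mB (leqnn _) rq; have := cc d dS.
move=> c2 h; have : #|nbr S d :\ q| <= 1 by lia.
rewrite leq_eqVlt ltnS leqn0 cards_eq0 => /orP[/cards1P [e he] | /eqP e0]; last first.
  by move: r2; rewrite (card_branch cS qS dn) e0 big_set0.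
have en : e \in nbr S d :\ q by rewrite he inE.
have /andP[eq eS] : (e != q) && (e \in nbr S d) by rewrite -in_setD1.
have lt := card_subbranch_lt cS qS dn en.
have cb := card_branch cS qS dn; rewrite he big_set1 in cb.
exists e; split => //; first exact: nbr_eq2 (nbr_sym qS dn) he.
apply: (leaf_of_branch_mod1 cS (conj m0 cc) dS eS).
- lia.
- by rewrite card_branch_compl //; have := card_branch_lt eS dS; lia.
- move=> a b aS bn ltb; apply: mB aS bn _; lia.
Qed.

(* The order of the part of S hanging at c away from p: the branch at p
   containing c if p is a neighbour of c, and all of S if p = c. *)
Definition subtree_order S c p := (\sum_(z in nbr S c :\ p) #|branch S c z|).+1.

(* A smallest subtree of order 0 mod 3 is a P3 hanging by its centre c
   (first case) or by an end c (second case). *)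
Lemma pendant_P3 S c p : connected S -> branch_cond S -> c \in S ->
  subtree_order S c p %% 3 = 0 -> no_zero_branch_below S (subtree_order S c p) ->
  (exists u u', [/\ u != u', nbr S c :\ p = [set u; u'],
                   nbr S u = [set c] & nbr S u' = [set c]])
  \/ (exists d t, [/\ nbr S c :\ p = [set d], t != c,
                     nbr S d = [set c; t] & nbr S t = [set d]]).
Proof.
move=> cS [m0 cc] cS0; rewrite /subtree_order.
set m := (\sum_(z in _) _).+1 => mm mB.
have chS z : z \in nbr S c :\ p -> z \in nbr S c by rewrite in_setD1 => /andP[].
have chlt z : z \in nbr S c :\ p -> #|branch S c z| < m.
  by move=> zn; rewrite /m ltnS; apply: (leq_sum_term (fun z => #|branch S c z|)).
have chnz z : z \in nbr S c :\ p -> #|branch S c z| %% 3 != 0.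
  by move=> zn; apply: mB cS0 (chS z zn) (chlt z zn).
have chpar z : z \in nbr S c :\ p -> #|branch S z c| %% 3 != 0.
  move=> zn; rewrite card_branch_compl // ?chS //.
  by have := chnz z zn; have := card_branch_lt (chS z zn) cS0; lia.
have chmin z : z \in nbr S c :\ p -> no_zero_branch_below S #|branch S c z|.
  move=> zn a b aS bn lt; apply: mB aS bn _; have := chlt z zn; lia.
have leaf z : z \in nbr S c :\ p -> #|branch S c z| %% 3 = 1 -> nbr S z = [set c].
  move=> zn r1.
  exact: (leaf_of_branch_mod1 cS (conj m0 cc) cS0 (chS z zn) r1 (chpar z zn) (chmin z zn)).
have : #|nbr S c :\ p| <= 2.
  apply: leq_trans (cc c cS0); apply: subset_leq_card; apply/subsetP => z zn.
  by rewrite inE chS // chnz.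
rewrite leq_eqVlt => /orP[/cards2P [u [u' [uu' hu]]] | ].
  have un : u \in nbr S c :\ p by rewrite hu !inE eqxx.
  have un' : u' \in nbr S c :\ p by rewrite hu !inE eqxx orbT.
  move: mm; rewrite /m hu big_setU1 ?inE //= big_set1 => mm.
  have := chnz u un; have := chnz u' un' => n1 n2.
  by left; exists u, u'; split => //; apply: leaf => //; lia.
rewrite ltnS leq_eqVlt ltnS leqn0 cards_eq0 => /orP[/cards1P [d hd] | /eqP e0]; last first.
  by move: mm; rewrite /m e0 big_set0.
have dn : d \in nbr S c :\ p by rewrite hd inE.
move: mm; rewrite /m hd big_set1 => mm.
have r2 : #|branch S c d| %% 3 = 2 by lia.
have [t [tc h1 h2]] := pendant_edge_of_branch_mod2 cS (conj m0 cc) cS0 (chS d dn) r2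
  (chpar d dn) (chmin d dn).
by right; exists d, t.
Qed.

Lemma edge_out_of_branch S p c a b : p \in S -> c \in nbr S p ->
  a \in branch S p c -> b \in S -> b \notin branch S p c -> adj a b -> a = c /\ b = p.
Proof.
move=> pS cn ab bS bnr ad.
have bp : b = p.
  by apply/eqP; apply: contraNT bnr => bp; exact: (branch_edge cn ab bS bp ad).
subst b; split => //; apply/esym.
apply: (connect_nbr_eq (A := S :\ p) (y := p)).
- by rewrite !inE eqxx.
- by case/nbrP: cn.
- by rewrite adj_sym.
- by move: ab; rewrite inE.
Qed.

Lemma branch_in_compl S p c v w : connected S -> p \in S -> c \in nbr S p ->
  v \in branch S c p -> w \in nbr (branch S c p) v ->
  let K := branch (branch S c p) v w in
  branch S v w = K :|: [set t in branch S p c | p \in K].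
Proof.
move=> cS pS cn vS' wn K.
set R := branch S p c; set S' := branch S c p.
have cS0 : c \in S by case/nbrP: cn.
have inS' t : (t \in S') = (t \in S) && (t \notin R).
  by rewrite /S' branch_compl ?in_setD 1?andbC.
have /andP[vS vR] : (v \in S) && (v \notin R) by rewrite -inS'.
have wn0 : w \in nbr S v.
  by case/nbrP: wn; rewrite inS' => /andP[wS _] vw; apply/nbrP.
have KS' : K \subset S' :\ v by apply: branch_sub wn.
have sub1 : K \subset branch S v w.
  apply/subsetP => t; rewrite !inE; apply: connect_inducedS.
  by apply: setSD; apply/subsetP => x; rewrite inS' => /andP[].
have sub2 : p \in K -> R \subset branch S v w.
  move=> pK; have pb := subsetP sub1 p pK.
  have cv : c != v by apply: contraNneq vR => <-; apply: branch_self.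
  have cb : c \in branch S v w.
    by apply: (branch_edge wn0 pb cS0 cv); case/nbrP: cn.
  apply/subsetP => r rR; rewrite -(branch_trans cb) inE.
  apply: (connect_inducedS (S := R)); last exact: (connected_branch (branch_self S p c) rR).
  apply/subsetP => t tR; rewrite in_setD1 (subsetP (branch_subset cn) t tR) andbT.
  by apply: contraNneq vR => <-.
apply/eqP; rewrite eqEsubset; apply/andP; split; last first.
  apply/subsetP => t /setUP [tK | /setIdP [tR pK]]; first exact: (subsetP sub1).
  exact: (subsetP (sub2 pK)).
apply/subsetP => t; rewrite [t \in branch S v w]inE.
apply: (connect_ind (P := fun t => t \in K :|: _)).
  by apply/setUP; left; apply: branch_self.
move=> u u' _ uQ /and3P[]; rewrite !in_setD1 => /andP[uv uS] /andP[u'v u'S] uu'.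
case/setUP: uQ => [uK | /setIdP [uR pK]]; last first.
  case u'R: (u' \in R); first by apply/setUP; right; apply/setIdP.
  have [_ up] := edge_out_of_branch pS cn uR u'S (negbT u'R) uu'.
  by subst u'; apply/setUP; left.
have := subsetP KS' u uK; rewrite in_setD1 inS' => /and3P[_ _ uR].
case u'R: (u' \in R).
  have [_ up] := edge_out_of_branch pS cn u'R uS uR ltac:(by rewrite adj_sym).
  by subst u; apply/setUP; right; apply/setIdP.
apply/setUP; left; apply: (branch_edge wn uK _ u'v uu').
by rewrite inS' u'S u'R.
Qed.

Lemma branch_mod3_in_compl S p c v w : connected S -> p \in S -> c \in nbr S p ->
  #|branch S p c| %% 3 = 0 -> v \in branch S c p -> w \in nbr (branch S c p) v ->
  #|branch (branch S c p) v w| %% 3 = #|branch S v w| %% 3.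
Proof.
move=> cS pS cn r0 vS' wn; rewrite (branch_in_compl cS pS cn vS' wn) /= cardsU.
set K := branch _ v w.
have -> : K :&: [set t in branch S p c | p \in K] = set0.
  apply/setP => t; rewrite in_set0; apply/negP => /setIP [tK /setIdP [tR _]].
  move: (subsetP (branch_sub wn) t tK); rewrite in_setD1 branch_compl //.
  by rewrite in_setD tR andbF.
rewrite cards0 subn0; case: (p \in K).
  have -> : [set t in branch S p c | true] = branch S p c.
    by apply/setP => t; rewrite inE andbT.
  by rewrite -modnDm r0 addn0 modn_mod.
have -> : [set t in branch S p c | false] = set0.
  by apply/setP => t; rewrite !inE andbF.
by rewrite cards0 addn0.
Qed.

Definition in_class_on S := exists n (e : rel nat) (g : T -> nat),
  [/\ inTT n e, #|S| = n, {in S &, injective g}, {in S, forall x, g x < n} &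
      {in S &, forall x y, adj x y = e (g x) (g y)}].

Lemma card_set3 (a b c : T) : a != b -> b != c -> a != c -> #|[set a; b; c]| = 3.
Proof.
move=> ab bc ac; rewrite setUC !cardsU1 cards1 !inE.
by rewrite (negbTE ab) eq_sym (negbTE ac) eq_sym (negbTE bc).
Qed.

Lemma in_set3 (a b c x : T) : (x \in [set a; b; c]) = [|| x == a, x == b | x == c].
Proof. by rewrite !inE orbA. Qed.

Lemma card3_eq_set3 A a b c : #|A| = 3 -> a \in A -> b \in A -> c \in A ->
  a != b -> b != c -> a != c -> A = [set a; b; c].
Proof.
move=> A3 aA bA cA ab bc ac; apply/eqP; rewrite eq_sym eqEcard card_set3 // A3 leqnn.
by rewrite andbT; apply/subsetP => x; rewrite in_set3 => /or3P[]/eqP->.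
Qed.

Lemma in_class_on_P3 S a b c : a != b -> b != c -> a != c -> S = [set a; b; c] ->
  adj a b -> adj b c -> ~~ adj a c -> in_class_on S.
Proof.
move=> ab bc ac -> hab hbc hac.
pose g x := if x == a then 0 else if x == b then 1 else 2.
have ga : g a = 0 by rewrite /g eqxx.
have gb : g b = 1 by rewrite /g eq_sym (negbTE ab) eqxx.
have gc : g c = 2 by rewrite /g eq_sym (negbTE ac) eq_sym (negbTE bc).
exists 3, (fun x y => sym_pair 0 1 x y || sym_pair 1 2 x y), g; split.
- by apply: TT_P3.
- exact: card_set3.
- by move=> x y; rewrite !in_set3 => /or3P[]/eqP-> /or3P[]/eqP->; rewrite ?ga ?gb ?gc.
- by move=> x; rewrite in_set3 => /or3P[]/eqP->; rewrite ?ga ?gb ?gc.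
- have hba : adj b a by rewrite adj_sym.
  have hcb : adj c b by rewrite adj_sym.
  have hca : adj c a = false by rewrite adj_sym; apply: negbTE.
  move=> x y; rewrite !in_set3 => /or3P[]/eqP-> /or3P[]/eqP->;
  by rewrite ?ga ?gb ?gc ?adj_irr ?hab ?hbc ?hba ?hcb ?hca ?(negbTE hac).
Qed.

Definition gext (g : T -> nat) n (a0 a1 a2 : T) x :=
  if x == a0 then n else if x == a1 then n.+1 else if x == a2 then n.+2 else g x.

Lemma gextE g n (a0 a1 a2 : T) : a0 != a1 -> a1 != a2 -> a0 != a2 ->
  [/\ gext g n a0 a1 a2 a0 = n, gext g n a0 a1 a2 a1 = n.+1
    & gext g n a0 a1 a2 a2 = n.+2].
Proof.
move=> d01 d12 d02; rewrite /gext eqxx eq_sym (negbTE d01) eqxx.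
by rewrite eq_sym (negbTE d02) eq_sym (negbTE d12) eqxx.
Qed.

Lemma gext_old g n (a0 a1 a2 : T) x : x \notin [set a0; a1; a2] ->
  gext g n a0 a1 a2 x = g x.
Proof. by rewrite in_set3 /gext => /norP[/negbTE -> /norP[/negbTE -> /negbTE ->]]. Qed.

(* Adding to S' three vertices a0, a1, a2, labelled n, n+1, n+2, whose only
   edge to S' joins the vertex labelled attv to p. *)
Lemma in_class_on_extend S S' n e g p a0 a1 a2 (e' : rel nat) attv :
  inTT n e -> #|S'| = n -> {in S' &, injective g} -> {in S', forall x, g x < n} ->
  {in S' &, forall x y, adj x y = e (g x) (g y)} -> p \in S' ->
  S = S' :|: [set a0; a1; a2] -> a0 \notin S' -> a1 \notin S' -> a2 \notin S' ->
  a0 != a1 -> a1 != a2 -> a0 != a2 -> inTT (n + 3) e' ->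
  (forall x y, x < n -> y < n -> e' x y = e x y) ->
  (forall k x, k < n -> n <= x < n + 3 -> e' x k = (x == attv) && (k == g p)) ->
  (forall k x, k < n -> n <= x < n + 3 -> e' k x = (x == attv) && (k == g p)) ->
  (forall x y, x \in [set a0; a1; a2] -> y \in [set a0; a1; a2] ->
     adj x y = e' (gext g n a0 a1 a2 x) (gext g n a0 a1 a2 y)) ->
  (forall a b, a \in [set a0; a1; a2] -> b \in S' ->
     adj a b = (gext g n a0 a1 a2 a == attv) && (b == p)) ->
  in_class_on S.
Proof.
move=> tt cS' ginj gb gadj pS' eS n0 n1 n2 d01 d12 d02 tt' E1 E2 E3 ERR ECR.
set R := [set a0; a1; a2]; set g' := gext g n a0 a1 a2.
have [g0 g1 g2] : [/\ g' a0 = n, g' a1 = n.+1 & g' a2 = n.+2] := gextE g n d01 d12 d02.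
have RS' x : x \in R -> x \notin S' by rewrite in_set3 => /or3P[]/eqP->.
have gS' x : x \in S' -> g' x = g x.
  by move=> xS; apply: gext_old; apply: contraL xS; apply: RS'.
have gR x : x \in R -> n <= g' x < n + 3.
  by rewrite in_set3 => /or3P[]/eqP->; rewrite ?g0 ?g1 ?g2; apply/andP; split; lia.
have inS x : x \in S -> (x \in S') || (x \in R) by rewrite eS in_setU.
exists (n + 3), e', g'; split => //.
- rewrite eS cardsU (_ : S' :&: R = set0) ?cards0 ?subn0 ?card_set3 ?cS' //.
  apply/setP => x; rewrite in_set0; apply/negP => /setIP [xS xR].
  by move: (RS' x xR); rewrite xS.
- move=> x y /inS /orP[xS'|xR] /inS /orP[yS'|yR].
  + by rewrite !gS' //; apply: ginj.
  + by rewrite (gS' x xS') => hx; have := gR y yR; have := gb x xS'; lia.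
  + by rewrite (gS' y yS') => hx; have := gR x xR; have := gb y yS'; lia.
  + move: xR yR; rewrite !in_set3 => /or3P[]/eqP-> /or3P[]/eqP->;
    by rewrite ?g0 ?g1 ?g2 // => h; lia.
- move=> x /inS /orP[xS'|/gR /andP[] //].
  by rewrite gS' //; apply: leq_trans (gb x xS') (leq_addr _ _).
- move=> x y /inS /orP[xS'|xR] /inS /orP[yS'|yR].
  + by rewrite !gS' // gadj // E1 //; apply: gb.
  + rewrite adj_sym ECR // (gS' x xS') E3 ?gR ?gb //.
    by congr (_ && _); apply/eqP/eqP => [->//|]; exact: ginj.
  + rewrite ECR // (gS' y yS') E2 ?gR ?gb //.
    by congr (_ && _); apply/eqP/eqP => [->//|]; exact: ginj.
  + exact: ERR.
Qed.

Definition attach_end n (e : rel nat) z : rel nat := fun x y =>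
  [|| [&& x < n, y < n & e x y], sym_pair n n.+1 x y, sym_pair n.+1 n.+2 x y
    | sym_pair n.+2 z x y].
Definition attach_center n (e : rel nat) z : rel nat := fun x y =>
  [|| [&& x < n, y < n & e x y], sym_pair n n.+1 x y, sym_pair n n.+2 x y
    | sym_pair n z x y].

Lemma attach_end_old n e z x y : x < n -> y < n -> attach_end n e z x y = e x y.
Proof. by move=> xn yn; rewrite /attach_end /sym_pair; apply/idP/idP; lia. Qed.

Lemma attach_end_cross n e z k x : z < n -> k < n -> n <= x < n + 3 ->
  attach_end n e z x k = (x == n.+2) && (k == z)
  /\ attach_end n e z k x = (x == n.+2) && (k == z).
Proof. by move=> *; rewrite /attach_end /sym_pair; split; apply/idP/idP; lia. Qed.

Lemma attach_end_new n e z : z < n ->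
  [/\ attach_end n e z n n.+1, attach_end n e z n.+1 n.+2 & ~~ attach_end n e z n n.+2]
  /\ [/\ attach_end n e z n.+1 n = attach_end n e z n n.+1,
         attach_end n e z n.+2 n.+1 = attach_end n e z n.+1 n.+2
       & attach_end n e z n.+2 n = attach_end n e z n n.+2]
  /\ [/\ ~~ attach_end n e z n n, ~~ attach_end n e z n.+1 n.+1
       & ~~ attach_end n e z n.+2 n.+2].
Proof.
move=> zn; rewrite /attach_end /sym_pair.
by split; [|split]; split; first [apply/idP; lia | apply/negP; lia | apply/idP/idP; lia].
Qed.

Lemma attach_center_old n e z x y : x < n -> y < n -> attach_center n e z x y = e x y.
Proof. by move=> xn yn; rewrite /attach_center /sym_pair; apply/idP/idP; lia. Qed.

Lemma attach_center_cross n e z k x : z < n -> k < n -> n <= x < n + 3 ->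
  attach_center n e z x k = (x == n) && (k == z)
  /\ attach_center n e z k x = (x == n) && (k == z).
Proof. by move=> *; rewrite /attach_center /sym_pair; split; apply/idP/idP; lia. Qed.

Lemma attach_center_new n e z : z < n ->
  [/\ attach_center n e z n n.+1, ~~ attach_center n e z n.+1 n.+2
    & attach_center n e z n n.+2]
  /\ [/\ attach_center n e z n.+1 n = attach_center n e z n n.+1,
         attach_center n e z n.+2 n.+1 = attach_center n e z n.+1 n.+2
       & attach_center n e z n.+2 n = attach_center n e z n n.+2]
  /\ [/\ ~~ attach_center n e z n n, ~~ attach_center n e z n.+1 n.+1
       & ~~ attach_center n e z n.+2 n.+2].
Proof.
move=> zn; rewrite /attach_center /sym_pair.
by split; [|split]; split; first [apply/idP; lia | apply/negP; lia | apply/idP/idP; lia].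
Qed.

Lemma gext_adj_new g n (e' : rel nat) (a0 a1 a2 : T) :
  a0 != a1 -> a1 != a2 -> a0 != a2 ->
  adj a0 a1 = e' n n.+1 -> adj a1 a2 = e' n.+1 n.+2 -> adj a0 a2 = e' n n.+2 ->
  e' n.+1 n = e' n n.+1 -> e' n.+2 n.+1 = e' n.+1 n.+2 -> e' n.+2 n = e' n n.+2 ->
  ~~ e' n n -> ~~ e' n.+1 n.+1 -> ~~ e' n.+2 n.+2 ->
  forall x y, x \in [set a0; a1; a2] -> y \in [set a0; a1; a2] ->
     adj x y = e' (gext g n a0 a1 a2 x) (gext g n a0 a1 a2 y).
Proof.
move=> d01 d12 d02 h01 h12 h02 s01 s12 s02 /negbTE z0 /negbTE z1 /negbTE z2 x y.
have [g0 g1 g2] := gextE g n d01 d12 d02.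
rewrite !in_set3 => /or3P[]/eqP-> /or3P[]/eqP->; rewrite ?g0 ?g1 ?g2 ?adj_irr //;
  by rewrite ?h01 ?h12 ?h02 // adj_sym ?h01 ?h12 ?h02.
Qed.

Lemma card_leaf_branch S d t : connected S -> d \in S -> t \in nbr S d ->
  nbr S t = [set d] -> #|branch S d t| = 1.
Proof.
move=> cS dS tn h; rewrite (card_branch cS dS tn) h.
by rewrite setDv big_set0.
Qed.

Lemma pendant_end_P3 S c p d t : connected S -> c \in S -> nbr S c :\ p = [set d] ->
  t != c -> nbr S d = [set c; t] -> nbr S t = [set d] ->
  [/\ d \in nbr S c, t \in nbr S d, subtree_order S c p = 3 &
      [/\ c != d, d != t & c != t] /\ [/\ adj c d, adj d t & ~~ adj c t]].
Proof.
move=> cS cS0 hc tc hd ht.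
have dn : d \in nbr S c by move: (set11 d); rewrite -hc in_setD1 => /andP[].
have tn : t \in nbr S d by rewrite hd !inE eqxx orbT.
have dS : d \in S by case/nbrP: dn.
have bd : #|branch S c d| = 2.
  rewrite (card_branch cS cS0 dn) hd (_ : [set c; t] :\ c = [set t]).
    by rewrite big_set1 (card_leaf_branch cS dS tn ht).
  apply/setP => x; rewrite !inE; case: (eqVneq x c) => [->|//].
  by rewrite eq_sym (negbTE tc).
split => //; first by rewrite /subtree_order hc big_set1 bd.
split; split.
- by rewrite eq_sym (nbr_neq dn).
- by rewrite eq_sym (nbr_neq tn).
- by rewrite eq_sym.
- by case/nbrP: dn.
- by case/nbrP: tn.
- apply/negP => ct; have : c \in nbr S t by rewrite inE cS0 adj_sym.
  by rewrite ht inE => /eqP cd; move: (nbr_neq dn); rewrite cd eqxx.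
Qed.

Lemma pendant_center_P3 S c p u u' : connected S -> c \in S -> u != u' ->
  nbr S c :\ p = [set u; u'] -> nbr S u = [set c] -> nbr S u' = [set c] ->
  [/\ u \in nbr S c, u' \in nbr S c, subtree_order S c p = 3 &
      [/\ u != c, c != u' & u != u'] /\ [/\ adj u c, adj c u' & ~~ adj u u']].
Proof.
move=> cS cS0 uu' hc hu hu'.
have un : u \in nbr S c by move: (setU11 u [set u']); rewrite -hc in_setD1 => /andP[].
have un' : u' \in nbr S c.
  by move: (set22 u u'); rewrite -hc in_setD1 => /andP[].
split => //.
  rewrite /subtree_order hc big_setU1 ?inE //= big_set1.
  by rewrite (card_leaf_branch cS cS0 un hu) (card_leaf_branch cS cS0 un' hu').
split; split => //.
- exact: nbr_neq un.
- by rewrite eq_sym (nbr_neq un').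
- by rewrite adj_sym; case/nbrP: un.
- by case/nbrP: un'.
- apply/negP => a; have : u' \in nbr S u by rewrite inE a andbT; case/nbrP: un'.
  by rewrite hu inE => /eqP e; move: (nbr_neq un'); rewrite e eqxx.
Qed.

Lemma mem_branch_nbr S p c z : p \in S -> c \in nbr S p -> z \in nbr S c :\ p ->
  z \in branch S p c.
Proof.
move=> pS cn; rewrite in_setD1 => /andP[zp zn].
exact: (subsetP (branch_subbranch pS cn zn zp)) (branch_self _ _ _).
Qed.

Lemma branch_complU S p c : connected S -> p \in S -> c \in nbr S p ->
  S = branch S c p :|: branch S p c.
Proof.
move=> cS pS cn; rewrite branch_compl // setDE setUIl [~: _ :|: _]setUC setUCr setIT.
by apply/esym/setUidPl/branch_subset.
Qed.

Lemma adj_branch_compl S p c (g' : T -> nat) attv : connected S -> p \in S ->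
  c \in nbr S p -> g' c = attv -> (forall x, x \in branch S p c -> g' x = attv -> x = c) ->
  forall a b, a \in branch S p c -> b \in branch S c p ->
  adj a b = (g' a == attv) && (b == p).
Proof.
move=> cS pS cn gc gx a b aR; rewrite branch_compl // in_setD => /andP[bR bS].
apply/idP/idP.
  by move=> ab; have [-> ->] := edge_out_of_branch pS cn aR bS bR ab; rewrite gc !eqxx.
by case/andP => /eqP ga /eqP ->; rewrite (gx a aR ga) adj_sym; case/nbrP: cn.
Qed.

Lemma in_class_on_attach_center S p c u u' : connected S -> p \in S -> c \in nbr S p ->
  u != u' -> nbr S c :\ p = [set u; u'] -> nbr S u = [set c] -> nbr S u' = [set c] ->
  in_class_on (branch S c p) -> in_class_on S.
Proof.
move=> cS pS cn uu' hc hu hu' [n [e [g [tt cSn ginj gb gadj]]]].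
have cS0 : c \in S by case/nbrP: cn.
have [un un' R3 [[uc cu' _] [auc acu' nuu']]] := pendant_center_P3 cS cS0 uu' hc hu hu'.
have cu : c != u by rewrite eq_sym.
have uR : u \in branch S p c by apply: mem_branch_nbr; rewrite // hc !inE eqxx.
have u'R : u' \in branch S p c by apply: mem_branch_nbr; rewrite // hc !inE eqxx orbT.
have eR : branch S p c = [set c; u; u'].
  by apply: card3_eq_set3; rewrite ?(card_branch cS pS cn) ?branch_self.
have nS' x : x \in branch S p c -> x \notin branch S c p.
  by rewrite (branch_compl cS pS cn) in_setD => ->.
have gp : g p < n by apply/gb/branch_self.
have [g0 g1 g2] := gextE g n cu uu' cu'.
have [[i1 i2 i3] [[s1 s2 s3] [z1 z2 z3]]] := attach_center_new e gp.
apply: (in_class_on_extend (a0 := c) (a1 := u) (a2 := u') (attv := n)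
  (e' := attach_center n e (g p))
  tt cSn ginj gb gadj (branch_self S c p) _ (nS' c (branch_self _ _ _)) (nS' u uR)
  (nS' u' u'R) cu uu' cu' (TT_O2 tt gp (fun x y => erefl))).
- by rewrite -eR; apply: branch_complU.
- exact: attach_center_old.
- by move=> k x kn xn; case: (attach_center_cross e gp kn xn).
- by move=> k x kn xn; case: (attach_center_cross e gp kn xn).
- have acu : adj c u by rewrite adj_sym.
  apply: gext_adj_new => //; first by rewrite acu i1.
    by rewrite (negbTE nuu') (negbTE i2).
  by rewrite acu' i3.
- rewrite -eR; apply: (adj_branch_compl (g' := gext g n c u u') cS pS cn g0).
  move=> x; rewrite eR in_set3 => /or3P[]/eqP->; rewrite ?g0 ?g1 ?g2 // => h;
  by exfalso; move: h; clear; lia.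
Qed.

Lemma in_class_on_attach_end S p c d t : connected S -> p \in S -> c \in nbr S p ->
  nbr S c :\ p = [set d] -> t != c -> nbr S d = [set c; t] -> nbr S t = [set d] ->
  in_class_on (branch S c p) -> in_class_on S.
Proof.
move=> cS pS cn hc tc hd ht [n [e [g [tt cSn ginj gb gadj]]]].
have cS0 : c \in S by case/nbrP: cn.
have [dn tn R3 [[cd dt _] [acd adt nct]]] := pendant_end_P3 cS cS0 hc tc hd ht.
have td : t != d by rewrite eq_sym.
have dc : d != c by rewrite eq_sym.
have dR : d \in branch S p c by apply: mem_branch_nbr; rewrite // hc !inE.
have tR : t \in branch S p c.
  have dp : d != p by move: (set11 d); rewrite -hc in_setD1 => /andP[].
  apply: (subsetP (branch_subbranch pS cn dn dp)).
  by apply: mem_branch_nbr; rewrite ?in_setD1 ?tc.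
have eR : branch S p c = [set t; d; c].
  by apply: card3_eq_set3; rewrite ?(card_branch cS pS cn) ?branch_self.
have nS' x : x \in branch S p c -> x \notin branch S c p.
  by rewrite (branch_compl cS pS cn) in_setD => ->.
have gp : g p < n by apply/gb/branch_self.
have [g0 g1 g2] := gextE g n td dc tc.
have [[i1 i2 i3] [[s1 s2 s3] [z1 z2 z3]]] := attach_end_new e gp.
apply: (in_class_on_extend (a0 := t) (a1 := d) (a2 := c) (attv := n.+2)
  (e' := attach_end n e (g p))
  tt cSn ginj gb gadj (branch_self S c p) _ (nS' t tR) (nS' d dR)
  (nS' c (branch_self _ _ _)) td dc tc (TT_O1 tt gp (fun x y => erefl))).
- by rewrite -eR; apply: branch_complU.
- exact: attach_end_old.
- by move=> k x kn xn; case: (attach_end_cross e gp kn xn).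
- by move=> k x kn xn; case: (attach_end_cross e gp kn xn).
- have atd : adj t d by rewrite adj_sym.
  have adc : adj d c by rewrite adj_sym.
  apply: gext_adj_new => //; first by rewrite atd i1.
    by rewrite adc i2.
  by rewrite adj_sym (negbTE nct) (negbTE i3).
- rewrite -eR; apply: (adj_branch_compl (g' := gext g n t d c) cS pS cn g2).
  move=> x; rewrite eR in_set3 => /or3P[]/eqP->; rewrite ?g0 ?g1 ?g2 // => h;
  by exfalso; move: h; clear; lia.
Qed.

Lemma branch_cond_compl S p c : connected S -> branch_cond S -> p \in S ->
  c \in nbr S p -> #|branch S p c| %% 3 = 0 -> branch_cond (branch S c p).
Proof.
move=> cS [m0 cc] pS cn r0; split.
  by rewrite card_branch_compl //; have := card_branch_lt cn pS; lia.
have sub : branch S c p \subset S by rewrite (branch_compl cS pS cn) subsetDl.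
move=> v vS'; apply: leq_trans (cc v (subsetP sub v vS')); apply: subset_leq_card.
apply/subsetP => w /setIdP [wn r]; have [wS' vw] := nbrP _ _ _ wn.
apply/setIdP; rewrite -(branch_mod3_in_compl cS pS cn r0 vS' wn) r.
by split => //; apply/nbrP; rewrite (subsetP sub w wS').
Qed.

Lemma minimal_zero_branch S :
  (exists p c, [/\ p \in S, c \in nbr S p, #|branch S p c| %% 3 = 0
                 & no_zero_branch_below S #|branch S p c|])
  \/ (forall a b, a \in S -> b \in nbr S a -> #|branch S a b| %% 3 != 0).
Proof.
pose P k := [exists p, exists c,
  [&& p \in S, c \in nbr S p, #|branch S p c| %% 3 == 0 & #|branch S p c| == k]].
have PP a b : a \in S -> b \in nbr S a -> #|branch S a b| %% 3 == 0 -> P #|branch S a b|.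
  by move=> aS bn r; apply/existsP; exists a; apply/existsP; exists b; rewrite aS bn r eqxx.
case: (boolP [exists p, exists c,
  [&& p \in S, c \in nbr S p & #|branch S p c| %% 3 == 0]]) => [ex|none]; last first.
  right => a b aS bn; apply/negP => r; move/negP: none; apply.
  by apply/existsP; exists a; apply/existsP; exists b; rewrite aS bn r.
have [k Pk] : exists k, P k.
  by case/existsP: ex => p /existsP [c /and3P [pS cn r0]]; exists #|branch S p c|; apply: PP.
left; case: (ex_minnP (ex_intro _ k Pk)).
move=> m /existsP [p /existsP [c /and4P [pS cn /eqP r0 /eqP szm]]] minm.
exists p, c; split => //; rewrite szm => a b aS bn lt; apply/negP => r.
by have := minm _ (PP a b aS bn r); rewrite leqNgt lt.
Qed.

Lemma in_class_on_no_zero_branch S : connected S -> 0 < #|S| -> branch_cond S ->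
  (forall a b, a \in S -> b \in nbr S a -> #|branch S a b| %% 3 != 0) -> in_class_on S.
Proof.
move=> cS /card_gt0P [c cS0] cond nz.
have e1 : nbr S c :\ c = nbr S c.
  apply/setP => x; rewrite in_setD1; case: eqVneq => // ->.
  by rewrite inE adj_irr andbF.
have hS : #|S| = subtree_order S c c by rewrite /subtree_order e1; exact: card_branches.
have r0 : subtree_order S c c %% 3 = 0 by rewrite -hS; case: cond.
have mB : no_zero_branch_below S (subtree_order S c c) by move=> a b aS bn _; apply: nz.
case: (pendant_P3 cS cond cS0 r0 mB) => [[u [u' [uu' hc hu hu']]] | [d [t [hc tc hd ht]]]].
  have [un un' S3 [[uc cu' _] [auc acu' nuu']]] := pendant_center_P3 cS cS0 uu' hc hu hu'.
  have uS := subsetP (nbr_subset S c) u un; have u'S := subsetP (nbr_subset S c) u' un'.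
  apply: (in_class_on_P3 uc cu' uu' _ auc acu' nuu').
  by apply: card3_eq_set3; rewrite ?hS.
have [dn tn S3 [[cd dt ct] [acd adt nct]]] := pendant_end_P3 cS cS0 hc tc hd ht.
have dS := subsetP (nbr_subset S c) d dn; have tS := subsetP (nbr_subset S d) t tn.
apply: (in_class_on_P3 cd dt ct _ acd adt nct).
by apply: card3_eq_set3; rewrite ?hS.
Qed.

Lemma in_class_on_of_cond S : connected S -> 0 < #|S| -> branch_cond S -> in_class_on S.
Proof.
elim: {S}#|S| {-2}S (leqnn #|S|) => [|N IH] S hN cS pos cond.
  by have := leq_trans pos hN.
have [[p [c [pS cn r0 mB]]] | nz] := minimal_zero_branch S; last first.
  exact: in_class_on_no_zero_branch.
have Rc : in_class_on (branch S c p).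
  apply: IH; [|exact: connected_branch| |exact: (branch_cond_compl cS cond pS cn r0)].
    have : 0 < #|branch S p c| by apply/card_gt0P; exists c; apply: branch_self.
    by rewrite (card_branch_compl cS pS cn); lia.
  by apply/card_gt0P; exists p; apply: branch_self.
have cS0 : c \in S by case/nbrP: cn.
rewrite (card_branch cS pS cn) in r0 mB.
case: (pendant_P3 cS cond cS0 r0 mB) => [[u [u' [uu' hc hu hu']]] | [d [t [hc tc hd ht]]]].
  exact: (in_class_on_attach_center cS pS cn uu' hc hu hu' Rc).
exact: (in_class_on_attach_end cS pS cn hc tc hd ht Rc).
Qed.

Section UpperBound.
Variable f : T -> nat.
Hypothesis f_inj : injective f.

Lemma card_preim1_le1 k : #|[set x | f x == k]| <= 1.
Proof.
case: (set_0Vmem [set x | f x == k]) => [->|[x xk]]; first by rewrite cards0.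
rewrite -(cards1 x) subset_leq_card //; apply/subsetP => z; rewrite !inE => /eqP zk.
by apply/eqP/f_inj; move: xk; rewrite inE => /eqP ->.
Qed.

(* Outside S', the vertices of D have labels among those of a P3 with centre
   mid; a dissociation set cannot contain the centre together with both ends. *)
Lemma card_diss_setD_le2 D S' mid o1 o2 : dissociation adj D ->
  (forall x, x \in D -> x \notin S' -> [|| f x == mid, f x == o1 | f x == o2]) ->
  mid != o1 -> mid != o2 ->
  (forall a b, a \in D -> b \in D -> f a = mid -> (f b == o1) || (f b == o2) -> adj a b) ->
  #|D :\: S'| <= 2.
Proof.
move=> /dissP dD cov n1 n2 adjm.
case: (boolP [exists x, (x \in D :\: S') && (f x == mid)]).
  case/existsP => x /andP[xX /eqP xm]; move: (xX); rewrite in_setD => /andP[_ xD].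
  rewrite (cardsD1 x) xX add1n ltnS; apply: leq_trans (dD x xD).
  apply: subset_leq_card; apply/subsetP => z; rewrite !inE => /and3P[zx zS' zD].
  rewrite zD /=; apply: adjm => //.
  case/or3P: (cov z zD zS') => [/eqP zm| -> | ->]; rewrite ?orbT //.
  by move: zx; rewrite (f_inj (etrans zm (esym xm))) eqxx.
move=> nomid.
suff sub : D :\: S' \subset [set z | f z == o1] :|: [set z | f z == o2].
  apply: leq_trans (subset_leq_card sub) _.
  apply: leq_trans (leq_card_setU [set z | f z == o1] [set z | f z == o2]).1 _.
  exact: (leq_add (card_preim1_le1 o1) (card_preim1_le1 o2)).
apply/subsetP => z zX; rewrite !inE.
have /negbTE fm : ~~ (f z == mid).
  by apply: contra nomid => h; apply/existsP; exists z; rewrite zX.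
by move: zX; rewrite in_setD => /andP[zS' zD]; move: (cov z zD zS'); rewrite fm.
Qed.

Lemma diss_in_extend_le n (e e' : rel nat) mid o1 o2 S :
  (forall S, (forall x, (x \in S) = (f x < n)) ->
     (forall x y, x \in S -> y \in S -> adj x y = e (f x) (f y)) ->
     3 * diss_in S <= 2 * n) ->
  (forall x, (x \in S) = (f x < n + 3)) ->
  (forall x y, x \in S -> y \in S -> adj x y = e' (f x) (f y)) ->
  (forall x y, x < n -> y < n -> e' x y = e x y) ->
  (forall k, n <= k < n + 3 -> [|| k == mid, k == o1 | k == o2]) ->
  mid != o1 -> mid != o2 -> e' mid o1 -> e' mid o2 ->
  3 * diss_in S <= 2 * (n + 3).
Proof.
move=> IH HS Hadj He hcov d1 d2 a1 a2.
pose S' := [set x | f x < n].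
have sub : S' \subset S by apply/subsetP => x; rewrite inE HS => ?; lia.
have IH' : 3 * diss_in S' <= 2 * n.
  apply: IH => [x|x y]; first by rewrite inE.
  rewrite !inE => xn yn; rewrite Hadj ?He // HS; lia.
suff : diss_in S <= diss_in S' + 2 by lia.
apply: diss_in_le => D DS dD.
rewrite -(cardsID S' D); apply: leq_add.
  by apply: diss_in_ge; [exact: subsetIr | apply: dissociationS dD; exact: subsetIl].
apply: (card_diss_setD_le2 (mid := mid) (o1 := o1) (o2 := o2) dD) => //.
  move=> x xD; rewrite inE -leqNgt => nx; apply: hcov; rewrite nx -HS.
  exact: (subsetP DS).
move=> a b aD bD fa fb.
rewrite (Hadj a b (subsetP DS a aD) (subsetP DS b bD)) fa.
by case/orP: fb => /eqP ->.
Qed.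

Lemma diss_upper_bound n e : inTT n e -> forall S, (forall x, (x \in S) = (f x < n)) ->
  (forall x y, x \in S -> y \in S -> adj x y = e (f x) (f y)) -> 3 * diss_in S <= 2 * n.
Proof.
have new3 m k : m <= k < m + 3 -> [|| k == m, k == m.+1 | k == m.+2].
  move=> /andP[k1 k2]; have : k = m \/ k = m.+1 \/ k = m.+2 by lia.
  by case=> [->|[->|->]]; rewrite !eqxx ?orbT.
elim=> {n e} [e He | n e e' z _ IH zn He' | n e e' z _ IH zn He'] S HS Hadj.
- suff : diss_in S <= 2 by lia.
  apply: diss_in_le => D DS dD; rewrite -(setD0 D).
  apply: (card_diss_setD_le2 (mid := 1) (o1 := 0) (o2 := 2) dD) => //.
    move=> x xD _; have := subsetP DS x xD; rewrite HS.
    by case: (f x) => [|[|[|]]].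
  move=> a b aD bD fa fb.
  rewrite (Hadj a b (subsetP DS a aD) (subsetP DS b bD)) He fa.
  by case/orP: fb => /eqP ->.
- have Hadj' x y : x \in S -> y \in S -> adj x y = attach_end n e z (f x) (f y).
    by move=> xS yS; rewrite Hadj // He'.
  have [[i1 i2 _] [[s1 _ _] _]] := attach_end_new e zn.
  apply: (diss_in_extend_le (mid := n.+1) (o1 := n) (o2 := n.+2) IH HS Hadj'
    (attach_end_old e z)) => //; first by move=> k /new3; rewrite orbCA.
  + by apply/eqP; lia.
  + by apply/eqP; lia.
  + by rewrite s1.
- have Hadj' x y : x \in S -> y \in S -> adj x y = attach_center n e z (f x) (f y).
    by move=> xS yS; rewrite Hadj // He'.
  have [[i1 _ i3] _] := attach_center_new e zn.
  apply: (diss_in_extend_le (mid := n) (o1 := n.+1) (o2 := n.+2) IH HS Hadj'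
    (attach_center_old e z)) => //.
  + exact: new3.
  + by apply/eqP; lia.
  + by apply/eqP; lia.
Qed.

End UpperBound.

Hypothesis adj_connected : forall x y : T, connect adj x y.

Lemma connected_setT : connected setT.
Proof.
move=> a b _ _; rewrite (eq_connect (e' := adj)) //.
by move=> u v; rewrite /induced !in_setT.
Qed.

Lemma diss_in_setT : diss adj = diss_in setT.
Proof. by apply: eq_bigl => D; rewrite subsetT. Qed.

Lemma card_bad_components y :
  #|[set C in components_minus adj y | #|C| %% 3 != 0]| = #|bad_branches setT y|.
Proof.
have eqc x : [set z | connect (del_adj adj y) x z] = branch setT y x.
  apply/setP => z; rewrite !inE; apply: eq_connect => a b.
  by rewrite /del_adj /induced !inE !andbT.
have -> : components_minus adj y = [set branch setT y x | x in nbr setT y].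
  apply/setP => C; apply/imsetP/imsetP => [[x xy ->]|[x xn ->]].
    rewrite eqc; have xy' : x != y by move: xy; rewrite !inE.
    have [w wn xw] := branch_cover connected_setT (in_setT y) (in_setT x) xy'.
    by exists w => //; rewrite (branch_trans xw).
  by exists x; [rewrite !inE (nbr_neq xn) | rewrite eqc].
have -> : [set C in [set branch setT y x | x in nbr setT y] | #|C| %% 3 != 0] =
          [set branch setT y x | x in bad_branches setT y].
  apply/setP => C; apply/setIdP/imsetP => [[/imsetP [x xn ->] r]|[x /setIdP [xn r] ->]].
    by exists x => //; apply/setIdP.
  by split => //; apply/imsetP; exists x.
rewrite card_in_imset // => x x' /setIdP [xn _] /setIdP [xn' _] e.
by apply: (branch_disj xn xn' (branch_self setT y x)); rewrite -e branch_self.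
Qed.

Definition components_cond := #|T| %% 3 = 0 /\
  forall y : T, #|[set C in components_minus adj y | #|C| %% 3 != 0]| <= 2.

Lemma components_cond_of_diss : 3 * diss adj = 2 * #|T| -> components_cond.
Proof.
move=> h; split; first lia.
move=> y; rewrite card_bad_components.
by apply: (card_bad_branches_le2 connected_setT _ (in_setT y)); rewrite -diss_in_setT cardsT h.
Qed.

Lemma in_class_T_of_components_cond : 0 < #|T| -> components_cond -> in_class_T adj.
Proof.
move=> pos [m0 cy].
have : in_class_on setT.
  apply: (in_class_on_of_cond connected_setT); first by rewrite cardsT.
  by split; rewrite ?cardsT // => y _; rewrite -card_bad_components.
case=> n [e [g [tt cn ginj gb gadj]]]; exists n, e, g; split => //.
- by rewrite -cn cardsT.
- by move=> x y; apply: ginj; rewrite in_setT.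
- by move=> x; apply: gb; rewrite in_setT.
- by move=> x y; apply: gadj; rewrite in_setT.
Qed.

Lemma diss_of_in_class_T : in_class_T adj -> 3 * diss adj = 2 * #|T|.
Proof.
case=> n [e [f [tt cn f_inj fb fadj]]].
have := diss_upper_bound f_inj tt (S := setT) (fun x => ltac:(by rewrite in_setT fb))
  (fun x y _ _ => fadj x y).
by have := diss_lower_bound connected_setT; rewrite -diss_in_setT cardsT cn; lia.
Qed.

End Tree.

Unset Implicit Arguments.

Theorem theorem2 (T : finType) (adj : rel T)
  (adj_sym : symmetric adj) (adj_irr : irreflexive adj)
  (Htree : is_tree adj) :
  let n := #|T| in
  [/\ (3 * diss adj = 2 * n <-> in_class_T adj),
      (in_class_T adj <->
         (n %% 3 = 0 /\
          forall y : T,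
            #|[set C in components_minus adj y | #|C| %% 3 != 0]| <= 2)) &
      (3 * diss adj = 2 * n <->
         (n %% 3 = 0 /\
          forall y : T,
            #|[set C in components_minus adj y | #|C| %% 3 != 0]| <= 2))].
Proof.
case: Htree => pos [conn acyc] n; rewrite {}/n.
have a_c := components_cond_of_diss adj_sym adj_irr acyc conn.
have c_b := in_class_T_of_components_cond adj_sym adj_irr acyc conn pos.
have b_a := diss_of_in_class_T adj_sym adj_irr acyc conn.
split; split.
- by move/a_c/c_b.
- exact: b_a.
- by move/b_a/a_c.
- exact: c_b.
- exact: a_c.
- by move/c_b/b_a.
Qed.
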